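(* Let $D\subseteq\mathbb{R}$ be an open interval, let $f:D\to\mathbb{R}$ be a sufficiently differentiable function, and let $\alpha\in D$ be a simple root of $f(x)=0$ (i.e. $f(\alpha)=0$, $f'(\alpha)\neq 0$). Fix $\kappa\in\mathbb{R}$, $\kappa\neq 0$, and let $G(t_1,t_2)$ and $H(s_1,s_2)$ be real-valued functions of two real variables, sufficiently differentiable near $(0,0)$. Consider the iteration, starting from $x_0$, $$ \begin{aligned} w_n &= x_n-\kappa f(x_n),\\ y_n &= x_n-\kappa\,\frac{f(x_n)^2}{f(x_n)-f(w_n)},\\ z_n &= y_n-\kappa\,\frac{f(y_n)\,f(x_n)}{f(x_n)-f(w_n)}\;G(t_1,t_2),\\ x_{n+1} &= z_n-\frac{f(z_n)}{\psi_n}\;H(s_1,s_2), \end{aligned} $$ where $t_1=\frac{f(y_n)}{f(x_n)}$, $t_2=\frac{f(y_n)}{f(w_n)}$, $s_1=\frac{f(z_n)}{f(x_n)}$, $s_2=\frac{f(z_n)}{f(w_n)}$, and $$ \psi_n=\frac{b(b-c)}{(a-b)(a-c)}\,\frac{v_1}{a}+\frac{-3b^2+2bc+2ab-ac}{(a-b)(b-c)}\,\frac{v_2}{b}+\frac{b(b-a)}{(a-c)(b-c)}\,\frac{v_3}{c}, $$ with $v_1=f(x_n)-f(y_n)$, $v_2=f(z_n)-f(y_n)$, $v_3=f(w_n)-f(y_n)$, $a=x_n-y_n$, $b=z_n-y_n$, $c=w_n-y_n$. If $x_0$ is chosen sufficiently close to $\alpha$, then the iterates $x_n$ converge to $\alpha$.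 Moreover, if $$ G(0,0)=1,\quad \frac{\partial G}{\partial t_1}(0,0)=1,\quad \frac{\partial G}{\partial t_2}(0,0)=1,\quad H(0,0)=1,\quad \frac{\partial H}{\partial s_1}(0,0)=0,\quad \frac{\partial H}{\partial s_2}(0,0)=0, $$ and the second partial derivatives $\frac{\partial^2 G}{\partial t_1^2},\frac{\partial^2 G}{\partial t_2^2},\frac{\partial^2 G}{\partial t_1\partial t_2},\frac{\partial^2 H}{\partial s_1^2},\frac{\partial^2 H}{\partial s_2^2},\frac{\partial^2 H}{\partial s_1\partial s_2}$ are bounded at $(0,0)$, then this iterative scheme has order of convergence at least eight, i.e. $|x_{n+1}-\alpha|=O(|x_n-\alpha|^8)$.
   Context: The quantity $\psi_n$ is the derivative at $z_n$ of the cubic polynomial interpolating $f$ at the four points $x_n,w_n,y_n,z_n$; it serves as a derivative-free approximation of $f'(z_n)$. Order of convergence $p$ means $|x_{n+1}-\alpha|\le C|x_n-\alpha|^p$ for some constant $C$ and all $n$ large enough. *)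

From Stdlib Require Import Reals.
From Coquelicot Require Import Coquelicot.
Open Scope R_scope.

Definition inD (lo hi : Rbar) (x : R) : Prop :=
  Rbar_lt lo (Finite x) /\ Rbar_lt (Finite x) hi.

Definition partial1 (G : R * R -> R) (p : R * R) : R :=
  Derive (fun t => G (t, snd p)) (fst p).
Definition partial2 (G : R * R -> R) (p : R * R) : R :=
  Derive (fun t => G (fst p, t)) (snd p).

Fixpoint Ck2 (k : nat) (U : R * R -> Prop) (G : R * R -> R) : Prop :=
  (forall p, U p -> continuous G p) /\
  match k with
  | O => True
  | S k' =>
      (forall p, U p -> ex_derive (fun t => G (t, snd p)) (fst p)
                     /\ ex_derive (fun t => G (fst p, t)) (snd p))
      /\ Ck2 k' U (partial1 G) /\ Ck2 k' U (partial2 G)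
  end.

(* "Sufficiently differentiable near (0,0)": C^infinity on some open square
   around the origin. *)
Definition smooth_near0 (G : R * R -> R) : Prop :=
  exists r, 0 < r /\
    forall k, Ck2 k (fun p => Rabs (fst p) < r /\ Rabs (snd p) < r) G.

Definition w_of (f : R -> R) (kappa x : R) : R := x - kappa * f x.

Definition y_of (f : R -> R) (kappa x : R) : R :=
  x - kappa * (f x ^ 2 / (f x - f (w_of f kappa x))).

Definition z_of (f : R -> R) (kappa : R) (G : R * R -> R) (x : R) : R :=
  let w := w_of f kappa x in
  let y := y_of f kappa x in
  y - kappa * (f y * f x / (f x - f w)) * G (f y / f x, f y / f w).

(* Derivative at z of the cubic interpolating f at x, w, y, z. *)
Definition psi_of (f : R -> R) (x y z w : R) : R :=
  let v1 := f x - f y in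
  let v2 := f z - f y in
  let v3 := f w - f y in
  let a := x - y in
  let b := z - y in
  let c := w - y in
  (b * (b - c)) / ((a - b) * (a - c)) * (v1 / a)
  + (- 3 * b ^ 2 + 2 * b * c + 2 * a * b - a * c) / ((a - b) * (b - c)) * (v2 / b)
  + (b * (b - a)) / ((a - c) * (b - c)) * (v3 / c).

Definition step (f : R -> R) (kappa : R) (G H : R * R -> R) (x : R) : R :=
  let w := w_of f kappa x in
  let y := y_of f kappa x in
  let z := z_of f kappa G x in
  z - f z / psi_of f x y z w * H (f z / f x, f z / f w).

Definition step_defined (f : R -> R) (kappa : R) (G : R * R -> R) (x : R) : Prop :=
  let w := w_of f kappa x in
  let y := y_of f kappa x in
  let z := z_of f kappa G x in
  let a := x - y in
  let b := z - y in
  let c := w - y in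
  f x <> 0 /\ f w <> 0 /\ f x - f w <> 0 /\
  a <> 0 /\ b <> 0 /\ c <> 0 /\ a - b <> 0 /\ a - c <> 0 /\ b - c <> 0 /\
  psi_of f x y z w <> 0.

From Stdlib Require Import Reals Lra Lia Psatz.
From Coquelicot Require Import Coquelicot.
Open Scope R_scope.

(* Write [e = x - alpha] and [f t = (t - alpha) dd t] with [dd alpha = f'(alpha)].
   Every quantity of one step is an explicit rational function of [e] and of
   the ratios [W = (w - alpha) / e], [Y = (y - alpha) / (e ^ 2 W)] and
   [Z = (z - alpha) / (y - alpha)], and a small calculus of local big-O bounds
   shows [y - alpha = O(e ^ 2)], [Z = O(1)], and [Z = O(e ^ 2)] once
   [G (0, 0) = 1] and [grad G (0, 0) = (1, 1)].  Since [psi] is the exact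
   derivative at [z] of every cubic through [(z, f z)], [psi - f'(z)] is a
   weighted combination of fourth-order Taylor remainders of [f] at [x], [y],
   [w], and the weights make it [O(e ^ 4)].  Finally
   [x' - alpha = (z - alpha) (psi - dd z * H (s1, s2)) / psi], which is
   [O(e ^ 2)] in general (hence local convergence by a quadratic contraction)
   and [O(e ^ 4) * O(e ^ 4)] when moreover [H (0, 0) = 1] and
   [grad H (0, 0) = 0]. *)

(** * Taylor bounds *)

Definition taylor_poly (f : R -> R) (n : nat) (s t : R) : R :=
  sum_f_R0 (fun m => (t - s) ^ m / INR (Factorial.fact m) * Derive_n f m s) n.

Lemma taylor_poly_diag (f : R -> R) (n : nat) (s : R) : taylor_poly f n s s = f s.
Proof.
  unfold taylor_poly; rewrite Rminus_diag.
  induction n as [|n IH]; simpl in *; [field | rewrite IH; unfold Rdiv; ring].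
Qed.

Lemma taylor_poly_1 (f : R -> R) (s t : R) :
  taylor_poly f 1 s t = f s + (t - s) * Derive_n f 1 s.
Proof. unfold taylor_poly; simpl; field. Qed.

Lemma taylor_poly_comp_opp (f : R -> R) (n : nat) (s t : R) :
  (forall k, locally s (fun y => forall j, (j <= k)%nat -> ex_derive_n f j y)) ->
  taylor_poly (fun y => f (- y)) n (- s) (- t) = taylor_poly f n s t.
Proof.
  intros Hs; apply sum_eq; intros m _.
  rewrite Derive_n_comp_opp, Ropp_involutive by (rewrite Ropp_involutive; apply Hs).
  replace (- t - - s) with (-1 * (t - s)) by ring.
  rewrite Rpow_mult_distr.
  replace ((-1) ^ m * (t - s) ^ m / INR (Factorial.fact m) * ((-1) ^ m * Derive_n f m s))
    with (((-1) * (-1)) ^ m * ((t - s) ^ m / INR (Factorial.fact m) * Derive_n f m s))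
    by (rewrite Rpow_mult_distr; unfold Rdiv; ring).
  replace ((-1) * (-1)) with 1 by ring. rewrite pow1; ring.
Qed.

(* The case [t < s] is [Taylor_Lagrange] for [y |-> f (- y)]. *)
Lemma taylor_lagrange_between (f : R -> R) (n : nat) (s t : R) :
  (forall u, Rmin s t <= u <= Rmax s t ->
     forall k, locally u (fun y => forall j, (j <= k)%nat -> ex_derive_n f j y)) ->
  exists zeta, Rmin s t <= zeta <= Rmax s t /\
    f t = taylor_poly f n s t
          + (t - s) ^ S n / INR (Factorial.fact (S n)) * Derive_n f (S n) zeta.
Proof.
  intros Hloc.
  assert (Hpt : forall u, Rmin s t <= u <= Rmax s t -> forall k, ex_derive_n f k u)
    by (intros u Hu k; exact (locally_singleton _ _ (Hloc u Hu k) k (le_n k))).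
  destruct (Rtotal_order s t) as [Hst | [<- | Hts]].
  - rewrite Rmin_left, Rmax_right in * by lra.
    destruct (Taylor_Lagrange f n s t Hst) as [zeta [Hz Heq]];
      [intros u Hu k _; apply Hpt; lra |].
    exists zeta; split; [lra | exact Heq].
  - exists s; split; [unfold Rmin, Rmax; destruct Rle_dec; lra |].
    rewrite taylor_poly_diag, Rminus_diag, pow_i by lia. unfold Rdiv; ring.
  - rewrite Rmin_right, Rmax_left in * by lra.
    destruct (Taylor_Lagrange (fun y => f (- y)) n (- s) (- t)) as [zeta [Hz Heq]];
      [lra | intros u Hu k _; apply ex_derive_n_comp_opp; apply Hloc; lra |].
    fold (taylor_poly (fun y => f (- y)) n (- s) (- t)) in Heq.
    rewrite !Ropp_involutive, taylor_poly_comp_opp in Heq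
      by (intro k; apply Hloc; lra).
    rewrite Derive_n_comp_opp in Heq by (apply Hloc; lra).
    exists (- zeta); split; [lra |].
    rewrite Heq. replace (- t - - s) with (-1 * (t - s)) by ring.
    rewrite Rpow_mult_distr.
    replace ((-1) ^ S n * (t - s) ^ S n / INR (Factorial.fact (S n))
               * ((-1) ^ S n * Derive_n f (S n) (- zeta)))
      with (((-1) * (-1)) ^ S n * ((t - s) ^ S n / INR (Factorial.fact (S n))
               * Derive_n f (S n) (- zeta)))
      by (rewrite Rpow_mult_distr; unfold Rdiv; ring).
    replace ((-1) * (-1)) with 1 by ring. rewrite pow1; ring.
Qed.

Section TaylorNear.
Variables (f : R -> R) (c r : R).
Hypothesis f_smooth : forall u, Rabs (u - c) < r -> forall n, ex_derive_n f n u.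

Lemma smooth_locally (r0 u : R) (k : nat) : r0 < r -> Rabs (u - c) <= r0 ->
  locally u (fun y => forall j, (j <= k)%nat -> ex_derive_n f j y).
Proof.
  intros Hr Hu.
  assert (Hp : 0 < r - r0) by lra.
  exists (mkposreal _ Hp); intros y Hy j _; apply f_smooth.
  change (Rabs (y - u) < r - r0) in Hy.
  pose proof (Rabs_triang (y - u) (u - c)).
  replace (y - u + (u - c)) with (y - c) in * by ring. lra.
Qed.

Lemma taylor_lagrange_bound (n : nat) (s t B r0 : R) : r0 < r ->
  Rabs (s - c) <= r0 -> Rabs (t - c) <= r0 ->
  (forall u, Rabs (u - c) <= r0 -> Rabs (Derive_n f (S n) u) <= B) ->
  Rabs (f t - taylor_poly f n s t)
    <= B * Rabs (t - s) ^ S n / INR (Factorial.fact (S n)).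
Proof.
  intros Hr Hs Ht HB.
  assert (Hseg : forall u, Rmin s t <= u <= Rmax s t -> Rabs (u - c) <= r0).
  { intros u Hu; apply Rabs_le_between in Hs; apply Rabs_le_between in Ht.
    apply Rabs_le; unfold Rmin, Rmax in Hu; destruct Rle_dec; lra. }
  destruct (taylor_lagrange_between f n s t) as [zeta [Hz ->]];
    [intros u Hu k; apply (smooth_locally r0); auto |].
  assert (Hfact : 0 < INR (Factorial.fact (S n)))
    by (apply lt_0_INR, Factorial.lt_O_fact).
  replace (taylor_poly f n s t + _ - _)
    with ((t - s) ^ S n / INR (Factorial.fact (S n)) * Derive_n f (S n) zeta) by ring.
  rewrite Rabs_mult; unfold Rdiv; rewrite Rabs_mult, <- RPow_abs.
  rewrite (Rabs_right (/ _)) by (apply Rle_ge, Rlt_le, Rinv_0_lt_compat; lra).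
  assert (0 <= Rabs (t - s) ^ S n) by (apply pow_le, Rabs_pos).
  assert (0 < / INR (Factorial.fact (S n))) by (apply Rinv_0_lt_compat; lra).
  specialize (HB zeta (Hseg zeta Hz)).
  apply Rle_trans with (Rabs (t - s) ^ S n * / INR (Factorial.fact (S n)) * B);
    [apply Rmult_le_compat_l; [apply Rmult_le_pos |]; lra | right; ring].
Qed.

End TaylorNear.

Lemma mvt_bound (g dg : R -> R) (a b B : R) :
  (forall u, Rmin a b <= u <= Rmax a b -> is_derive g u (dg u) /\ Rabs (dg u) <= B) ->
  Rabs (g b - g a) <= B * Rabs (b - a).
Proof.
  intros H.
  destruct (MVT_gen g a b dg) as [u [Hu ->]].
  - intros u Hu; apply H; lra.
  - intros u Hu; apply continuity_pt_filterlim.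
    apply (@ex_derive_continuous R_AbsRing R_NormedModule g u).
    exists (dg u); apply H, Hu.
  - rewrite Rabs_mult; apply Rmult_le_compat_r; [apply Rabs_pos | apply H, Hu].
Qed.

Lemma segment0_abs_le (a u : R) : Rmin 0 a <= u <= Rmax 0 a -> Rabs u <= Rabs a.
Proof.
  unfold Rmin, Rmax; destruct Rle_dec; intros Hu; apply Rabs_le;
    [rewrite (Rabs_right a) | rewrite (Rabs_left a)]; lra.
Qed.

Lemma mvt_bound0 (g dg : R -> R) (a B : R) :
  (forall u, Rabs u <= Rabs a -> is_derive g u (dg u) /\ Rabs (dg u) <= B) ->
  Rabs (g a - g 0) <= B * Rabs a.
Proof.
  intros H; rewrite <- (Rminus_0_r a) at 2.
  apply (mvt_bound g dg); intros u Hu; apply H, segment0_abs_le, Hu.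
Qed.

(* Apply [mvt_bound0] to [s |-> g s - s * dg 0], whose derivative is
   [dg s - dg 0]. *)
Lemma taylor1_lipschitz (g dg : R -> R) (a B : R) : 0 <= B ->
  (forall u, Rabs u <= Rabs a -> is_derive g u (dg u)) ->
  (forall u, Rabs u <= Rabs a -> Rabs (dg u - dg 0) <= B * Rabs u) ->
  Rabs (g a - g 0 - a * dg 0) <= B * a ^ 2.
Proof.
  intros HB Hg Hdg.
  replace (g a - g 0 - a * dg 0) with ((g a - a * dg 0) - (g 0 - 0 * dg 0)) by ring.
  apply Rle_trans with ((B * Rabs a) * Rabs a).
  - apply (mvt_bound0 (fun s => g s - s * dg 0) (fun s => dg s - dg 0)).
    intros u Hu; split.
    + apply (is_derive_minus g (fun s => s * dg 0)); [apply Hg, Hu |].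
      auto_derive; [exact I | ring].
    + apply Rle_trans with (1 := Hdg u Hu). apply Rmult_le_compat_l; assumption.
  - rewrite Rmult_assoc, <- Rabs_mult, Rabs_right by (apply Rle_ge; nra).
    right; ring.
Qed.

Lemma continuous_locally_bounded {T : UniformSpace} (g : T -> R) (p : T) :
  continuous g p -> exists d : posreal, forall q, ball p d q -> Rabs (g q) <= Rabs (g p) + 1.
Proof.
  intros Hc.
  destruct (proj1 (filterlim_locally g (g p)) Hc (mkposreal 1 Rlt_0_1)) as [d Hd].
  exists d; intros q Hq.
  assert (Hball : Rabs (g q - g p) < 1) by exact (Hd q Hq).
  pose proof (Rabs_triang (g q - g p) (g p)).
  replace (g q - g p + g p) with (g q) in * by ring; lra.
Qed.

Lemma continuous_bounded_near0 (g : R * R -> R) : continuous g (0, 0) ->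
  exists d M, 0 < d /\ 0 <= M /\
    forall a b, Rabs a < d -> Rabs b < d -> Rabs (g (a, b)) <= M.
Proof.
  intros Hc; destruct (continuous_locally_bounded g (0, 0) Hc) as [d Hd].
  exists d, (Rabs (g (0, 0)) + 1); split; [apply cond_pos |].
  split; [pose proof (Rabs_pos (g (0, 0))); lra |].
  intros a b Ha Hb; apply Hd.
  split; [change (Rabs (a - 0) < d) | change (Rabs (b - 0) < d)];
    rewrite Rminus_0_r; assumption.
Qed.

Definition taylor2_rem (G : R * R -> R) (t1 t2 : R) : R :=
  G (t1, t2) - G (0, 0) - t1 * partial1 G (0, 0) - t2 * partial2 G (0, 0).

(* Move from [(t1, t2)] to [(0, t2)] along the first variable, then to [(0, 0)]
   along the second; the change of [partial1 G] along the second leg is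
   controlled by the mixed derivative. *)
Lemma smooth_near0_taylor2 (G : R * R -> R) : smooth_near0 G ->
  exists rho K, 0 < rho /\ 0 <= K /\ forall t1 t2, Rabs t1 < rho -> Rabs t2 < rho ->
    Rabs (taylor2_rem G t1 t2) <= K * (t1 ^ 2 + t2 ^ 2).
Proof.
  intros [r [Hr HC]].
  destruct (HC 2%nat) as [_ [HdG [[_ [Hd1 [[H11 _] [H12 _]]]] [_ [Hd2 [_ [H22 _]]]]]]].
  assert (U0 : Rabs (fst (0, 0)) < r /\ Rabs (snd (0, 0)) < r)
    by (simpl; rewrite Rabs_R0; lra).
  destruct (continuous_bounded_near0 _ (H11 _ U0)) as [e1 [B1 [He1 [HB1 Hb1]]]].
  destruct (continuous_bounded_near0 _ (H12 _ U0)) as [e2 [B2 [He2 [HB2 Hb2]]]].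
  destruct (continuous_bounded_near0 _ (H22 _ U0)) as [e3 [B3 [He3 [HB3 Hb3]]]].
  set (rho := Rmin r (Rmin e1 (Rmin e2 e3))).
  assert (Hrho : 0 < rho) by (unfold rho; repeat apply Rmin_pos; lra).
  assert (Hrho_le : rho <= r /\ rho <= e1 /\ rho <= e2 /\ rho <= e3).
  { unfold rho; repeat split; unfold Rmin; repeat destruct Rle_dec; lra. }
  destruct Hrho_le as [Hr_r [Hr_1 [Hr_2 Hr_3]]].
  exists rho, (B1 + B2 + B3); split; [exact Hrho | split; [lra |]].
  intros t1 t2 Ht1 Ht2.
  assert (HA : Rabs (G (t1, t2) - G (0, t2) - t1 * partial1 G (0, t2)) <= B1 * t1 ^ 2).
  { apply (taylor1_lipschitz (fun s => G (s, t2)) (fun s => partial1 G (s, t2)) t1 B1 HB1).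
    - intros u Hu. apply Derive_correct, (HdG (u, t2)); simpl; lra.
    - intros u Hu.
      apply (mvt_bound0 (fun s => partial1 G (s, t2)) (fun s => partial1 (partial1 G) (s, t2))).
      intros v Hv; split; [apply Derive_correct, (Hd1 (v, t2)) | apply Hb1]; simpl; lra. }
  assert (HB : Rabs (partial1 G (0, t2) - partial1 G (0, 0)) <= B2 * Rabs t2).
  { apply (mvt_bound0 (fun s => partial1 G (0, s)) (fun s => partial2 (partial1 G) (0, s))).
    intros v Hv; split; [apply Derive_correct, (Hd1 (0, v)) | apply Hb2];
      simpl; rewrite ?Rabs_R0; lra. }
  assert (HC' : Rabs (G (0, t2) - G (0, 0) - t2 * partial2 G (0, 0)) <= B3 * t2 ^ 2).
  { apply (taylor1_lipschitz (fun s => G (0, s)) (fun s => partial2 G (0, s)) t2 B3 HB3).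
    - intros u Hu. apply Derive_correct, (HdG (0, u)); simpl; rewrite Rabs_R0; lra.
    - intros u Hu.
      apply (mvt_bound0 (fun s => partial2 G (0, s)) (fun s => partial2 (partial2 G) (0, s))).
      intros v Hv; split; [apply Derive_correct, (Hd2 (0, v)) | apply Hb3];
        simpl; rewrite ?Rabs_R0; lra. }
  unfold taylor2_rem.
  replace (G (t1, t2) - G (0, 0) - t1 * partial1 G (0, 0) - t2 * partial2 G (0, 0))
    with ((G (t1, t2) - G (0, t2) - t1 * partial1 G (0, t2))
          + t1 * (partial1 G (0, t2) - partial1 G (0, 0))
          + (G (0, t2) - G (0, 0) - t2 * partial2 G (0, 0))) by ring.
  set (DA := G (t1, t2) - G (0, t2) - t1 * partial1 G (0, t2)) in *.
  set (DB := partial1 G (0, t2) - partial1 G (0, 0)) in *.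
  set (DC := G (0, t2) - G (0, 0) - t2 * partial2 G (0, 0)) in *.
  pose proof (Rabs_triang (DA + t1 * DB) DC).
  pose proof (Rabs_triang DA (t1 * DB)).
  rewrite Rabs_mult in *.
  assert (Rabs t1 * Rabs DB <= B2 * (Rabs t1 * Rabs t2))
    by (pose proof (Rabs_pos t1); nra).
  assert (2 * (Rabs t1 * Rabs t2) <= t1 ^ 2 + t2 ^ 2).
  { rewrite <- (pow2_abs t1), <- (pow2_abs t2).
    pose proof (pow2_ge_0 (Rabs t1 - Rabs t2)). nra. }
  nra.
Qed.

(** * Local big-O calculus at [alpha] *)

Section LocalOrder.
Context {alpha : R} {dom : R -> Prop}.

(* Eventually as [x -> alpha] through [dom]; [dom] will be the set of points
   where the step is well defined. *)
Definition near (P : R -> Prop) : Prop :=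
  exists r, 0 < r /\ forall x, dom x -> Rabs (x - alpha) < r -> P x.

Definition bigO (k : nat) (q : R -> R) : Prop :=
  exists C, 0 <= C /\ near (fun x => Rabs (q x) <= C * Rabs (x - alpha) ^ k).

Definition away0 (q : R -> R) : Prop :=
  exists m, 0 < m /\ near (fun x => m <= Rabs (q x)).

Lemma near_and (P Q : R -> Prop) : near P -> near Q -> near (fun x => P x /\ Q x).
Proof.
  intros [r1 [H1 P1]] [r2 [H2 P2]]; exists (Rmin r1 r2); split; [apply Rmin_pos; lra |].
  intros x Hx Hr; split; [apply P1 | apply P2]; auto.
  - apply Rlt_le_trans with (1 := Hr), Rmin_l.
  - apply Rlt_le_trans with (1 := Hr), Rmin_r.
Qed.

Lemma near_impl (P Q : R -> Prop) : near P -> (forall x, dom x -> P x -> Q x) -> near Q.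
Proof. intros [r [Hr HP]] H; exists r; split; auto. Qed.

Lemma near_ball (r : R) : 0 < r -> near (fun x => Rabs (x - alpha) < r).
Proof. intros Hr; exists r; split; auto. Qed.

Lemma bigO_dominated (k : nat) (q1 q2 : R -> R) (K : R) :
  bigO k q1 -> near (fun x => Rabs (q2 x) <= K * Rabs (q1 x)) -> bigO k q2.
Proof.
  intros [C [HC H1]] H2; exists (Rabs K * C); split; [apply Rmult_le_pos; auto; apply Rabs_pos |].
  apply (near_impl _ _ (near_and _ _ H1 H2)); intros x _ [A B].
  apply Rle_trans with (1 := B), Rle_trans with (Rabs K * Rabs (q1 x)).
  - apply Rmult_le_compat_r; [apply Rabs_pos | apply Rle_abs].
  - rewrite Rmult_assoc; apply Rmult_le_compat_l; [apply Rabs_pos | exact A].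
Qed.

Lemma bigO_ext (k : nat) (q1 q2 : R -> R) :
  bigO k q1 -> (forall x, dom x -> q2 x = q1 x) -> bigO k q2.
Proof.
  intros H1 H2; apply (bigO_dominated k q1 q2 1 H1).
  exists 1; split; [lra |]; intros x Hx _; rewrite (H2 x Hx); lra.
Qed.

Lemma bigO_plus (k : nat) (q1 q2 : R -> R) :
  bigO k q1 -> bigO k q2 -> bigO k (fun x => q1 x + q2 x).
Proof.
  intros [C1 [HC1 H1]] [C2 [HC2 H2]]; exists (C1 + C2); split; [lra |].
  apply (near_impl _ _ (near_and _ _ H1 H2)); intros x _ [A B].
  pose proof (Rabs_triang (q1 x) (q2 x)); lra.
Qed.

Lemma bigO_opp (k : nat) (q : R -> R) : bigO k q -> bigO k (fun x => - q x).
Proof.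
  intros H; apply (bigO_dominated k q _ 1 H).
  exists 1; split; [lra |]; intros; rewrite Rabs_Ropp; lra.
Qed.

Lemma bigO_minus (k : nat) (q1 q2 : R -> R) :
  bigO k q1 -> bigO k q2 -> bigO k (fun x => q1 x - q2 x).
Proof. intros H1 H2; exact (bigO_plus k q1 _ H1 (bigO_opp k q2 H2)). Qed.

Lemma bigO_mult (k1 k2 k : nat) (q1 q2 : R -> R) : (k1 + k2)%nat = k ->
  bigO k1 q1 -> bigO k2 q2 -> bigO k (fun x => q1 x * q2 x).
Proof.
  intros <- [C1 [HC1 H1]] [C2 [HC2 H2]]; exists (C1 * C2); split; [apply Rmult_le_pos; lra |].
  apply (near_impl _ _ (near_and _ _ H1 H2)); intros x _ [A B].
  rewrite Rabs_mult, pow_add.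
  replace (C1 * C2 * (Rabs (x - alpha) ^ k1 * Rabs (x - alpha) ^ k2))
    with ((C1 * Rabs (x - alpha) ^ k1) * (C2 * Rabs (x - alpha) ^ k2)) by ring.
  apply Rmult_le_compat; auto; apply Rabs_pos.
Qed.

Lemma bigO_weaken (k k' : nat) (q : R -> R) : (k' <= k)%nat -> bigO k q -> bigO k' q.
Proof.
  intros Hk [C [HC H]]; exists C; split; auto.
  apply (near_impl _ _ (near_and _ _ H (near_ball 1 Rlt_0_1))); intros x _ [A B].
  apply Rle_trans with (1 := A), Rmult_le_compat_l; auto.
  replace k with (k' + (k - k'))%nat by lia; rewrite pow_add.
  assert (0 <= Rabs (x - alpha) ^ k') by (apply pow_le, Rabs_pos).
  assert (0 <= Rabs (x - alpha) ^ (k - k')) by (apply pow_le, Rabs_pos).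
  assert (Rabs (x - alpha) ^ (k - k') <= 1)
    by (rewrite <- (pow1 (k - k')); apply pow_incr; split; [apply Rabs_pos | lra]).
  nra.
Qed.

Lemma bigO_const (c : R) : bigO 0 (fun _ => c).
Proof.
  exists (Rabs c); split; [apply Rabs_pos |].
  exists 1; split; [lra |]; intros; simpl; lra.
Qed.

Lemma bigO_err : bigO 1 (fun x => x - alpha).
Proof. exists 1; split; [lra |]; exists 1; split; [lra |]; intros; simpl; lra. Qed.

Lemma bigO_inv (q : R -> R) : away0 q -> bigO 0 (fun x => / q x).
Proof.
  intros [m [Hm H]]; exists (/ m); split; [left; apply Rinv_0_lt_compat; lra |].
  apply (near_impl _ _ H); intros x _ A; simpl; rewrite Rmult_1_r.
  assert (q x <> 0) by (intro E; rewrite E, Rabs_R0 in A; lra).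
  rewrite Rabs_inv; apply Rinv_le_contravar; lra.
Qed.

Lemma bigO_div (k : nat) (q1 q2 : R -> R) :
  bigO k q1 -> away0 q2 -> bigO k (fun x => q1 x / q2 x).
Proof. intros H1 H2; exact (bigO_mult k 0 k q1 _ (Nat.add_0_r k) H1 (bigO_inv q2 H2)). Qed.

Lemma bigO_pow (n k : nat) (q : R -> R) : bigO k q -> bigO (n * k) (fun x => q x ^ n).
Proof.
  intros Hq; induction n as [|n IH].
  - apply (bigO_ext 0 (fun _ => 1)); [apply bigO_const | reflexivity].
  - exact (bigO_mult k (n * k) _ q _ eq_refl Hq IH).
Qed.

Lemma bigO_abs (k : nat) (q : R -> R) : bigO k q -> bigO k (fun x => Rabs (q x)).
Proof.
  intros H; apply (bigO_dominated k q _ 1 H).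
  exists 1; split; [lra |]; intros; rewrite Rabs_Rabsolu; lra.
Qed.

Lemma bigO_small (q : R -> R) (eps : R) : bigO 1 q -> 0 < eps -> near (fun x => Rabs (q x) < eps).
Proof.
  intros [C [HC H]] He.
  assert (Hr : 0 < eps / (C + 1)) by (apply Rdiv_lt_0_compat; lra).
  apply (near_impl _ _ (near_and _ _ H (near_ball _ Hr))); intros x _ [A B].
  simpl in A; rewrite Rmult_1_r in A.
  apply Rlt_div_r in B; [| lra].
  pose proof (Rabs_pos (x - alpha)); nra.
Qed.

Lemma away0_of_bigO (q : R -> R) (c : R) : bigO 1 (fun x => q x - c) -> c <> 0 -> away0 q.
Proof.
  intros H Hc; assert (Hc' : 0 < Rabs c) by (apply Rabs_pos_lt; auto).
  exists (Rabs c / 2); split; [lra |].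
  apply (near_impl _ _ (bigO_small _ (Rabs c / 2) H ltac:(lra))); intros x _ A.
  pose proof (Rabs_triang (q x - c) (- q x)).
  replace (q x - c + - q x) with (- c) in * by ring; rewrite !Rabs_Ropp in *; lra.
Qed.

Lemma bigO0_of_shift (k : nat) (q : R -> R) (c : R) : bigO k (fun x => q x - c) -> bigO 0 q.
Proof.
  intros H; apply (bigO_ext 0 (fun x => (q x - c) + c)); [| intros; ring].
  apply bigO_plus; [apply (bigO_weaken k); [lia | exact H] | apply bigO_const].
Qed.

Lemma bigO0_comp_bounded (u h : R -> R) (r B : R) : bigO 1 (fun x => u x - alpha) -> 0 < r ->
  (forall t, Rabs (t - alpha) <= r -> Rabs (h t) <= B) -> bigO 0 (fun x => h (u x)).
Proof.
  intros H Hr HB; exists (Rabs B); split; [apply Rabs_pos |].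
  apply (near_impl _ _ (bigO_small _ r H Hr)); intros x _ A; simpl; rewrite Rmult_1_r.
  apply Rle_trans with B; [apply HB; lra | apply Rle_abs].
Qed.

Lemma away0_mult (q1 q2 : R -> R) : away0 q1 -> away0 q2 -> away0 (fun x => q1 x * q2 x).
Proof.
  intros [m1 [H1 N1]] [m2 [H2 N2]]; exists (m1 * m2); split; [apply Rmult_lt_0_compat; auto |].
  apply (near_impl _ _ (near_and _ _ N1 N2)); intros x _ [A B].
  rewrite Rabs_mult; apply Rmult_le_compat; lra.
Qed.

Lemma bigO_smooth_taylor2 (Gf : R * R -> R) (k : nat) (a b : R -> R) :
  smooth_near0 Gf -> (1 <= k)%nat -> bigO k a -> bigO k b ->
  bigO (2 * k) (fun x => taylor2_rem Gf (a x) (b x)).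
Proof.
  intros HG Hk Ha Hb.
  destruct (smooth_near0_taylor2 Gf HG) as [rho [K [Hrho [HK HT]]]].
  apply (bigO_dominated _ (fun x => a x ^ 2 + b x ^ 2) _ K).
  - apply bigO_plus; apply bigO_pow; auto.
  - assert (Ha1 := bigO_small a rho (bigO_weaken k 1 a Hk Ha) Hrho).
    assert (Hb1 := bigO_small b rho (bigO_weaken k 1 b Hk Hb) Hrho).
    apply (near_impl _ _ (near_and _ _ Ha1 Hb1)); intros x _ [A1 A2].
    apply Rle_trans with (1 := HT _ _ A1 A2).
    apply Rmult_le_compat_l; [exact HK | apply Rle_abs].
Qed.

Lemma bigO0_smooth (Gf : R * R -> R) (k : nat) (a b : R -> R) :
  smooth_near0 Gf -> (1 <= k)%nat -> bigO k a -> bigO k b -> bigO 0 (fun x => Gf (a x, b x)).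
Proof.
  intros HG Hk Ha Hb.
  apply (bigO_ext 0 (fun x => taylor2_rem Gf (a x) (b x) + Gf (0, 0)
                              + a x * partial1 Gf (0, 0) + b x * partial2 Gf (0, 0)));
    [| intros; unfold taylor2_rem; ring].
  assert (Ha0 : bigO 0 a) by (apply (bigO_weaken k); [lia | exact Ha]).
  assert (Hb0 : bigO 0 b) by (apply (bigO_weaken k); [lia | exact Hb]).
  apply bigO_plus; [apply bigO_plus; [apply bigO_plus |] |].
  - apply (bigO_weaken (2 * k)); [lia | apply bigO_smooth_taylor2; auto].
  - apply bigO_const.
  - apply (bigO_mult 0 0); [lia | exact Ha0 | apply bigO_const].
  - apply (bigO_mult 0 0); [lia | exact Hb0 | apply bigO_const].
Qed.

End LocalOrder.

(** * The interpolating derivative [psi] *)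

Definition psi_w1 (a b c : R) : R := b * (b - c) / ((a - b) * (a - c) * a).
Definition psi_w2 (a b c : R) : R :=
  (- 3 * b ^ 2 + 2 * b * c + 2 * a * b - a * c) / ((a - b) * (b - c) * b).
Definition psi_w3 (a b c : R) : R := b * (b - a) / ((a - c) * (b - c) * c).
Definition cubic (f0 d p q s t : R) : R := f0 + d * (t - s) + p * (t - s) ^ 2 + q * (t - s) ^ 3.

(* [psi_of] differentiates exactly every cubic through [(z, f z)]; hence for
   any such cubic [P] with slope [d] at [z], [psi_of f - d] only depends on
   the residues [f - P] at [x], [y], [w]. *)
Lemma psi_of_residues (f : R -> R) (x y z w d p q : R) :
  x - y <> 0 -> z - y <> 0 -> w - y <> 0 -> (x - y) - (z - y) <> 0 ->
  (x - y) - (w - y) <> 0 -> (z - y) - (w - y) <> 0 ->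
  psi_of f x y z w - d =
     psi_w1 (x - y) (z - y) (w - y)
       * ((f x - cubic (f z) d p q z x) - (f y - cubic (f z) d p q z y))
   - psi_w2 (x - y) (z - y) (w - y) * (f y - cubic (f z) d p q z y)
   + psi_w3 (x - y) (z - y) (w - y)
       * ((f w - cubic (f z) d p q z w) - (f y - cubic (f z) d p q z y)).
Proof.
  intros; unfold psi_of, psi_w1, psi_w2, psi_w3, cubic; cbv zeta.
  field; repeat split; auto.
Qed.

Lemma Rabs_pow4 (t : R) : Rabs (t ^ 4) = t ^ 4.
Proof.
  apply Rabs_right, Rle_ge; replace 4%nat with (2 * 2)%nat by lia.
  rewrite pow_mult; apply pow2_ge_0.
Qed.

Lemma Rabs_mult_pow4_le (K r M t : R) :
  Rabs r <= M * t ^ 4 -> Rabs (K * r) <= M * Rabs (K * t ^ 4).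
Proof.
  intros Hr; rewrite !Rabs_mult, Rabs_pow4.
  pose proof (Rabs_pos K); nra.
Qed.

(* Parametrisation of [a = x - y], [b = z - y], [c = w - y] by [e = x - alpha]
   and the ratios [W = (w - alpha) / e], [Y = (y - alpha) / (e ^ 2 W)],
   [Z = (z - alpha) / (y - alpha)]; [tau1], ..., [tau5] are the five products
   of a weight [psi_w*] with a fourth power of a node distance to [z]. *)
Section PsiResidue.
Variables (e W Y Z : R).

Definition bet := W * Y * (Z - 1).
Definition alp := 1 - e * W * Y.
Definition gam := 1 - e * Y.
Definition mu := 1 - e * W * Y * Z.
Definition nu := 1 - W.
Definition lam := e * Y * Z - 1.
Definition av := e * alp.
Definition bv := e ^ 2 * bet.
Definition cv := e * W * gam.
Definition tau1 := e ^ 4 * bet * W * lam * mu ^ 3 / (nu * alp).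
Definition tau2 := e ^ 8 * bet ^ 5 * W * lam / (mu * nu * alp).
Definition tau3 := (- 3 * bv ^ 2 + 2 * bv * cv + 2 * av * bv - av * cv)
                   * e ^ 4 * W ^ 2 * Y ^ 3 * (Z - 1) ^ 3 / (mu * lam).
Definition tau4 := - (e ^ 4 * bet * mu * W ^ 2 * lam ^ 3 / (nu * gam)).
Definition tau5 := - (e ^ 8 * W ^ 3 * Y ^ 5 * (Z - 1) ^ 5 * mu / (nu * lam * gam)).

Lemma av_sub_bv : av - bv = e * mu. Proof. unfold av, bv, alp, bet, mu; ring. Qed.
Lemma av_sub_cv : av - cv = e * nu. Proof. unfold av, cv, alp, gam, nu; ring. Qed.
Lemma bv_sub_cv : bv - cv = e * W * lam. Proof. unfold bv, cv, bet, gam, lam; ring. Qed.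

Hypotheses (he : e <> 0) (hW : W <> 0) (hY : Y <> 0) (hZ : Z - 1 <> 0)
  (halp : alp <> 0) (hgam : gam <> 0) (hmu : mu <> 0) (hnu : nu <> 0) (hlam : lam <> 0).

Lemma psi_residue_bound (M rx ry rw : R) :
  Rabs rx <= M * (av - bv) ^ 4 -> Rabs ry <= M * bv ^ 4 -> Rabs rw <= M * (cv - bv) ^ 4 ->
  Rabs (psi_w1 av bv cv * (rx - ry) - psi_w2 av bv cv * ry + psi_w3 av bv cv * (rw - ry))
   <= M * (Rabs tau1 + Rabs tau2 + Rabs tau3 + Rabs tau4 + Rabs tau5).
Proof.
  intros Hx Hy Hw.
  assert (E1 : psi_w1 av bv cv * (av - bv) ^ 4 = tau1).
  { unfold psi_w1; rewrite av_sub_bv, av_sub_cv, bv_sub_cv; unfold tau1, bv, av.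
    field; repeat split; auto. }
  assert (E2 : psi_w1 av bv cv * bv ^ 4 = tau2).
  { unfold psi_w1; rewrite av_sub_bv, av_sub_cv, bv_sub_cv; unfold tau2, bv, av.
    field; repeat split; auto. }
  assert (E3 : psi_w2 av bv cv * bv ^ 4 = tau3).
  { unfold psi_w2, tau3; rewrite av_sub_bv, bv_sub_cv; unfold bv, bet.
    field; repeat split; auto. }
  assert (E4 : psi_w3 av bv cv * (cv - bv) ^ 4 = tau4).
  { unfold psi_w3; replace (cv - bv) with (- (e * W * lam)) by (rewrite <- bv_sub_cv; ring).
    replace (bv - av) with (- (e * mu)) by (rewrite <- av_sub_bv; ring).
    rewrite av_sub_cv, bv_sub_cv; unfold tau4, bv, cv.
    field; repeat split; auto. }
  assert (E5 : psi_w3 av bv cv * bv ^ 4 = tau5).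
  { unfold psi_w3; replace (bv - av) with (- (e * mu)) by (rewrite <- av_sub_bv; ring).
    rewrite av_sub_cv, bv_sub_cv; unfold tau5, bv, cv, bet.
    field; repeat split; auto. }
  pose proof (Rabs_mult_pow4_le (psi_w1 av bv cv) rx M (av - bv) Hx) as B1.
  pose proof (Rabs_mult_pow4_le (psi_w1 av bv cv) ry M bv Hy) as B2.
  pose proof (Rabs_mult_pow4_le (psi_w2 av bv cv) ry M bv Hy) as B3.
  pose proof (Rabs_mult_pow4_le (psi_w3 av bv cv) rw M (cv - bv) Hw) as B4.
  pose proof (Rabs_mult_pow4_le (psi_w3 av bv cv) ry M bv Hy) as B5.
  rewrite E1 in B1; rewrite E2 in B2; rewrite E3 in B3; rewrite E4 in B4; rewrite E5 in B5.
  replace (psi_w1 av bv cv * (rx - ry) - psi_w2 av bv cv * ry + psi_w3 av bv cv * (rw - ry))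
    with (psi_w1 av bv cv * rx + - (psi_w1 av bv cv * ry) + - (psi_w2 av bv cv * ry)
          + psi_w3 av bv cv * rw + - (psi_w3 av bv cv * ry)) by ring.
  set (u1 := psi_w1 av bv cv * rx) in *; set (u2 := psi_w1 av bv cv * ry) in *.
  set (u3 := psi_w2 av bv cv * ry) in *; set (u4 := psi_w3 av bv cv * rw) in *.
  set (u5 := psi_w3 av bv cv * ry) in *.
  clearbody u1 u2 u3 u4 u5.
  pose proof (Rabs_triang (u1 + - u2 + - u3 + u4) (- u5)).
  pose proof (Rabs_triang (u1 + - u2 + - u3) u4).
  pose proof (Rabs_triang (u1 + - u2) (- u3)).
  pose proof (Rabs_triang u1 (- u2)).
  rewrite !Rabs_Ropp in *; rewrite !Rmult_plus_distr_l; lra.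
Qed.

End PsiResidue.
(** * Error analysis of one step *)

Section Scheme.
Variables (f : R -> R) (alpha kappa : R) (G H : R * R -> R) (r1 r0 B : R).
Hypothesis f_smooth : forall u, Rabs (u - alpha) < r1 -> forall n, ex_derive_n f n u.
Hypothesis Hr0 : 0 < r0.
Hypothesis Hr01 : r0 < r1.
Hypothesis HB0 : 0 <= B.
Hypothesis f_derive_bound :
  forall u, Rabs (u - alpha) <= r0 -> forall k, (k <= 4)%nat -> Rabs (Derive_n f k u) <= B.
Hypothesis Hroot : f alpha = 0.
Hypothesis Hsimple : Derive_n f 1 alpha <> 0.
Hypothesis Hkappa : kappa <> 0.

Lemma taylor_bound_near (n : nat) (s t : R) : (n <= 3)%nat ->
  Rabs (s - alpha) <= r0 -> Rabs (t - alpha) <= r0 ->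
  Rabs (f t - taylor_poly f n s t) <= B * Rabs (t - s) ^ S n / INR (Factorial.fact (S n)).
Proof.
  intros Hn Hs Ht; apply (taylor_lagrange_bound f alpha r1 f_smooth n s t B r0); auto.
  intros u Hu; apply f_derive_bound; [exact Hu | lia].
Qed.

Lemma taylor_cubic_bound (s t : R) : Rabs (s - alpha) <= r0 -> Rabs (t - alpha) <= r0 ->
  Rabs (f t - cubic (f s) (Derive_n f 1 s) (Derive_n f 2 s / 2) (Derive_n f 3 s / 6) s t)
   <= B / 24 * (t - s) ^ 4.
Proof.
  intros Hs Ht.
  replace (cubic _ _ _ _ s t) with (taylor_poly f 3 s t)
    by (unfold taylor_poly, cubic; simpl; field).
  apply Rle_trans with (1 := taylor_bound_near 3 s t (le_n 3) Hs Ht).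
  rewrite RPow_abs, Rabs_pow4; right; simpl; field.
Qed.

(* At [t = alpha], [rem3] is the junk value [0 / 0 = 0]; [rem3_bound] holds
   there as well. *)
Definition f1 : R := Derive_n f 1 alpha.
Definition f2 : R := Derive_n f 2 alpha / 2.
Definition c2 : R := f2 / f1.
Definition rem3 (t : R) : R :=
  (f t - f1 * (t - alpha) - f2 * (t - alpha) ^ 2) / (t - alpha) ^ 3.
Definition dd (t : R) : R := f1 + f2 * (t - alpha) + rem3 t * (t - alpha) ^ 2.

Lemma f_eq_dd (t : R) : f t = (t - alpha) * dd t.
Proof.
  destruct (Req_dec t alpha) as [-> | E]; [rewrite Hroot; ring |].
  unfold dd, rem3; field; intro E'; apply E; lra.
Qed.

Lemma dd_alpha : dd alpha = f1.
Proof. unfold dd; rewrite Rminus_diag; ring. Qed.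

Lemma rem3_bound (t : R) : Rabs (t - alpha) <= r0 -> Rabs (rem3 t) <= B / 6.
Proof.
  intros Ht; destruct (Req_dec t alpha) as [-> | E].
  - unfold rem3, Rdiv; rewrite Rminus_diag, Hroot.
    replace (0 - f1 * 0 - f2 * 0 ^ 2) with 0 by ring; rewrite Rmult_0_l, Rabs_R0; lra.
  - assert (Hpos : 0 < Rabs (t - alpha)) by (apply Rabs_pos_lt; lra).
    assert (Ha : Rabs (alpha - alpha) <= r0) by (rewrite Rminus_diag, Rabs_R0; lra).
    pose proof (taylor_bound_near 2 alpha t ltac:(lia) Ha Ht) as T.
    unfold rem3, Rdiv; rewrite Rabs_mult, Rabs_inv, <- RPow_abs.
    apply (Rmult_le_reg_r (Rabs (t - alpha) ^ 3)); [apply pow_lt; lra |].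
    rewrite Rmult_assoc, Rinv_l, Rmult_1_r by (apply pow_nonzero; lra).
    replace (f t - f1 * (t - alpha) - f2 * (t - alpha) ^ 2)
      with (f t - taylor_poly f 2 alpha t)
      by (unfold taylor_poly, f1, f2; simpl; rewrite Hroot; field).
    apply Rle_trans with (1 := T); right; simpl; field.
Qed.

Lemma deriv_dd_bound (t : R) : Rabs (t - alpha) <= r0 ->
  Rabs (Derive_n f 1 t - dd t) <= B / 2 * Rabs (t - alpha).
Proof.
  intros Ht; destruct (Req_dec t alpha) as [-> | E].
  - rewrite dd_alpha; unfold f1; rewrite !Rminus_diag, !Rabs_R0; lra.
  - assert (Hpos : 0 < Rabs (t - alpha)) by (apply Rabs_pos_lt; lra).
    assert (Ha : Rabs (alpha - alpha) <= r0) by (rewrite Rminus_diag, Rabs_R0; lra).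
    pose proof (taylor_bound_near 1 t alpha ltac:(lia) Ht Ha) as T.
    replace (f alpha - taylor_poly f 1 t alpha)
      with ((t - alpha) * (Derive_n f 1 t - dd t)) in T
      by (rewrite taylor_poly_1, Hroot, (f_eq_dd t); ring).
    rewrite Rabs_mult, (Rabs_minus_sym alpha t) in T.
    replace (INR (Factorial.fact 2)) with 2 in T by (simpl; ring).
    apply (Rmult_le_reg_l (Rabs (t - alpha))); [exact Hpos | nra].
Qed.

Definition defined (x : R) : Prop := step_defined f kappa G x.

Local Notation Oe := (@bigO alpha defined).
Local Notation Near := (@near alpha defined).
Local Notation Away := (@away0 alpha defined).

(* With [e = x - alpha]: [w - alpha = e Wn], [y - alpha = e ^ 2 Wn Yn] and
   [z - alpha = (y - alpha) Zn]. *)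
Definition err (x : R) : R := x - alpha.
Definition wn (x : R) : R := w_of f kappa x.
Definition yn (x : R) : R := y_of f kappa x.
Definition zn (x : R) : R := z_of f kappa G x.
Definition Wn (x : R) : R := 1 - kappa * dd x.
Definition ddw (x : R) : R := dd (wn x).
Definition den (x : R) : R := dd x - Wn x * ddw x.
Definition Yn (x : R) : R :=
  (f2 * (1 - Wn x) + err x * (rem3 x - rem3 (wn x) * Wn x ^ 2)) / den x.
Definition t1 (x : R) : R := f (yn x) / f x.
Definition t2 (x : R) : R := f (yn x) / f (wn x).
Definition zcoef (x : R) : R := kappa * dd x / den x.
Definition Zn (x : R) : R := 1 - zcoef x * dd (yn x) * G (t1 x, t2 x).
Definition s1 (x : R) : R := f (zn x) / f x.
Definition s2 (x : R) : R := f (zn x) / f (wn x).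
Definition psin (x : R) : R := psi_of f x (yn x) (zn x) (wn x).

Lemma wn_err (x : R) : wn x - alpha = err x * Wn x.
Proof. unfold wn, w_of, Wn, err; rewrite (f_eq_dd x); ring. Qed.

Lemma f_wn (x : R) : f (wn x) = err x * Wn x * ddw x.
Proof. rewrite f_eq_dd, wn_err; reflexivity. Qed.

Lemma dd_sub_ddw (x : R) :
  dd x - ddw x = err x * (f2 * (1 - Wn x) + err x * (rem3 x - rem3 (wn x) * Wn x ^ 2)).
Proof. unfold ddw, dd; rewrite wn_err; unfold err; ring. Qed.

Lemma defined_nonzero (x : R) : defined x ->
  err x <> 0 /\ dd x <> 0 /\ Wn x <> 0 /\ ddw x <> 0 /\ den x <> 0.
Proof.
  intros [h1 [h2 [h3 _]]].
  rewrite f_eq_dd in h1; fold (wn x) in h2, h3; rewrite f_wn in h2, h3.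
  rewrite f_eq_dd in h3; fold (err x) in h1, h3.
  assert (err x <> 0) by (intro E; apply h1; rewrite E; ring).
  assert (dd x <> 0) by (intro E; apply h1; rewrite E; ring).
  assert (Wn x <> 0) by (intro E; apply h2; rewrite E; ring).
  assert (ddw x <> 0) by (intro E; apply h2; rewrite E; ring).
  repeat split; auto.
  intro E; apply h3; unfold den in E.
  replace (err x * dd x - err x * Wn x * ddw x) with (err x * (dd x - Wn x * ddw x)) by ring.
  rewrite E; ring.
Qed.

Lemma yn_err_alg (e a Fx Fw k c sx sw Wv : R) : Wv = 1 - k * Fx ->
  Fx - Fw = e * (c * (1 - Wv) + e * (sx - sw * Wv ^ 2)) -> e <> 0 -> Fx - Wv * Fw <> 0 ->
  (e + a) - k * ((e * Fx) ^ 2 / (e * Fx - e * Wv * Fw)) - a =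
  e ^ 2 * Wv * ((c * (1 - Wv) + e * (sx - sw * Wv ^ 2)) / (Fx - Wv * Fw)).
Proof.
  intros HW HF He HD.
  replace (c * (1 - Wv) + e * (sx - sw * Wv ^ 2)) with ((Fx - Fw) / e)
    by (rewrite HF; field; auto).
  subst Wv; field; split; auto; split; auto.
  intro E; apply HD.
  assert (Hprod : e * (Fx - (1 - k * Fx) * Fw) = 0) by (rewrite <- E; ring).
  apply Rmult_integral in Hprod; destruct Hprod; [contradiction | assumption].
Qed.

Lemma yn_err (x : R) : defined x -> yn x - alpha = err x ^ 2 * Wn x * Yn x.
Proof.
  intros HP; destruct (defined_nonzero x HP) as [he [hF [hW [hFw hD]]]].
  unfold yn, y_of; fold (wn x); rewrite f_wn, (f_eq_dd x); fold (err x).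
  replace x with (err x + alpha) at 1 by (unfold err; ring).
  unfold Yn, den.
  apply (yn_err_alg (err x) alpha (dd x) (ddw x) kappa f2 (rem3 x) (rem3 (wn x)) (Wn x));
    auto; apply dd_sub_ddw.
Qed.

Lemma zn_err (x : R) : defined x -> zn x - alpha = (yn x - alpha) * Zn x.
Proof.
  intros HP; destruct (defined_nonzero x HP) as [he [hF [hW [hFw hD]]]].
  unfold zn, z_of; fold (wn x) (yn x).
  change (f (yn x) / f x) with (t1 x); change (f (yn x) / f (wn x)) with (t2 x).
  unfold Zn, zcoef; rewrite f_wn, (f_eq_dd x), (f_eq_dd (yn x)); fold (err x).
  unfold den in *; field; split; auto.
  intro E; apply hD.
  assert (Hprod : err x * (dd x - Wn x * ddw x) = 0) by (rewrite <- E; ring).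
  apply Rmult_integral in Hprod; destruct Hprod; [contradiction | assumption].
Qed.

Lemma t1_eq (x : R) : defined x -> t1 x = err x * Wn x * Yn x * dd (yn x) / dd x.
Proof.
  intros HP; destruct (defined_nonzero x HP) as [he [hF [hW [hFw hD]]]].
  unfold t1; rewrite (f_eq_dd (yn x)), (yn_err x HP), (f_eq_dd x); fold (err x).
  field; auto.
Qed.

Lemma t2_eq (x : R) : defined x -> t2 x = err x * Yn x * dd (yn x) / ddw x.
Proof.
  intros HP; destruct (defined_nonzero x HP) as [he [hF [hW [hFw hD]]]].
  unfold t2; rewrite (f_eq_dd (yn x)), (yn_err x HP), f_wn; field; auto.
Qed.

Lemma s1_eq (x : R) : defined x -> s1 x = err x * Wn x * Yn x * Zn x * dd (zn x) / dd x.
Proof.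
  intros HP; destruct (defined_nonzero x HP) as [he [hF [hW [hFw hD]]]].
  unfold s1; rewrite (f_eq_dd (zn x)), (zn_err x HP), (yn_err x HP), (f_eq_dd x).
  fold (err x); field; auto.
Qed.

Lemma s2_eq (x : R) : defined x -> s2 x = err x * Yn x * Zn x * dd (zn x) / ddw x.
Proof.
  intros HP; destruct (defined_nonzero x HP) as [he [hF [hW [hFw hD]]]].
  unfold s2; rewrite (f_eq_dd (zn x)), (zn_err x HP), (yn_err x HP), f_wn; field; auto.
Qed.

Lemma step_err (x : R) : defined x -> step f kappa G H x - alpha =
  (zn x - alpha) * ((psin x - dd (zn x) * H (s1 x, s2 x)) / psin x).
Proof.
  intros HP.
  assert (hp : psin x <> 0) by (destruct HP as [_ [_ [_ [_ [_ [_ [_ [_ [_ h]]]]]]]]]; exact h).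
  unfold step; cbv zeta; fold (wn x) (yn x) (zn x).
  change (psi_of f x (yn x) (zn x) (wn x)) with (psin x).
  change (f (zn x) / f x) with (s1 x); change (f (zn x) / f (wn x)) with (s2 x).
  rewrite (f_eq_dd (zn x)); field; auto.
Qed.

Lemma err_O1 : Oe 1 err.
Proof. apply bigO_err. Qed.

Lemma err_O0 : Oe 0 err.
Proof. exact (bigO_weaken 1 0 err (le_0_n 1) err_O1). Qed.

Lemma rem3_comp_O0 (u : R -> R) : Oe 1 (fun x => u x - alpha) -> Oe 0 (fun x => rem3 (u x)).
Proof. intros Hu; exact (bigO0_comp_bounded u rem3 r0 (B / 6) Hu Hr0 rem3_bound). Qed.

Lemma dd_comp_O (u : R -> R) (k : nat) : (1 <= k)%nat -> Oe k (fun x => u x - alpha) ->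
  Oe k (fun x => dd (u x) - f1).
Proof.
  intros Hk Hu.
  apply (bigO_ext k (fun x => (u x - alpha) * (f2 + rem3 (u x) * (u x - alpha)))).
  - apply (bigO_mult k 0); [lia | auto |].
    apply bigO_plus; [apply bigO_const|].
    apply (bigO_mult 0 0); [lia | |]. apply rem3_comp_O0. apply (bigO_weaken k); [lia | auto].
    apply (bigO_weaken k); [lia | auto].
  - intros x _. unfold dd. ring.
Qed.

Lemma rem3_O0 : Oe 0 rem3.
Proof. apply (rem3_comp_O0 (fun x => x)), bigO_err. Qed.

Lemma dd_O1 : Oe 1 (fun x => dd x - f1).
Proof. apply (dd_comp_O (fun x => x)); auto. apply bigO_err. Qed.

Lemma dd_O0 : Oe 0 dd.
Proof. apply (bigO0_of_shift 1 dd f1 dd_O1). Qed.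

Lemma dd_away : Away dd.
Proof. apply (away0_of_bigO dd f1 dd_O1 Hsimple). Qed.

Lemma Wn_O0 : Oe 0 Wn.
Proof.
  apply (bigO_ext 0 (fun x => 1 - kappa * dd x)); [|intros; reflexivity].
  apply bigO_minus; [apply bigO_const|].
  apply (bigO_mult 0 0); [lia | apply bigO_const | apply dd_O0].
Qed.

Lemma wn_O1 : Oe 1 (fun x => wn x - alpha).
Proof.
  apply (bigO_ext 1 (fun x => err x * Wn x)); [| intros x _; apply wn_err].
  apply (bigO_mult 1 0); [lia | |]; [apply bigO_err | apply Wn_O0].
Qed.

Lemma rem3w_O0 : Oe 0 (fun x => rem3 (wn x)).
Proof. apply rem3_comp_O0, wn_O1. Qed.

Lemma ddw_O1 : Oe 1 (fun x => ddw x - f1).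
Proof. apply (dd_comp_O wn 1); auto. apply wn_O1. Qed.

Lemma ddw_away : Away ddw.
Proof. apply (away0_of_bigO ddw f1 ddw_O1 Hsimple). Qed.

Lemma den_O1 : Oe 1 (fun x => den x - kappa * f1 ^ 2).
Proof.
  apply (bigO_ext 1 (fun x => (dd x - f1) - Wn x * (ddw x - f1) + f1 * kappa * (dd x - f1))).
  - apply bigO_plus; [apply bigO_minus|].
    + apply dd_O1.
    + apply (bigO_mult 0 1); [lia | |]; [apply Wn_O0 | apply ddw_O1].
    + apply (bigO_mult 0 1); [lia | |]; [apply bigO_const | apply dd_O1].
  - intros x _. unfold den, Wn. ring.
Qed.

Lemma den_away : Away den.
Proof.
  apply (away0_of_bigO den (kappa * f1 ^ 2) den_O1).
  apply Rmult_integral_contrapositive_currified; auto. apply pow_nonzero; auto.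
Qed.

Lemma Yn_O1 : Oe 1 (fun x => Yn x - c2).
Proof.
  apply (bigO_ext 1 (fun x => (f2 * kappa * (dd x - f1) - c2 * (den x - kappa * f1 ^ 2)
      + err x * (rem3 x - rem3 (wn x) * Wn x ^ 2)) / den x)).
  - apply bigO_div; [|apply den_away]. apply bigO_plus; [apply bigO_minus|].
    + apply (bigO_mult 0 1); [lia | apply bigO_const | apply dd_O1].
    + apply (bigO_mult 0 1); [lia | apply bigO_const | apply den_O1].
    + apply (bigO_mult 1 0); [lia | apply err_O1 |].
      apply bigO_minus; [apply rem3_O0|].
      apply (bigO_mult 0 0); [lia | apply rem3w_O0 |].
      apply (bigO_pow 2 0 Wn Wn_O0).
  - intros x HP. destruct (defined_nonzero x HP) as [he [hF [hW [hFw hD]]]].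
    unfold Yn, c2, den, Wn in *. field. auto.
Qed.

Lemma Yn_O0 : Oe 0 Yn.
Proof. exact (bigO0_of_shift 1 Yn c2 Yn_O1). Qed.

Lemma yn_O2 : Oe 2 (fun x => yn x - alpha).
Proof.
  apply (bigO_ext 2 (fun x => err x ^ 2 * Wn x * Yn x)); [| exact yn_err].
  apply (bigO_mult 2 0); [lia | | apply Yn_O0].
  apply (bigO_mult 2 0); [lia | | apply Wn_O0].
  apply (bigO_pow 2 1 err err_O1).
Qed.

Lemma ddy_O2 : Oe 2 (fun x => dd (yn x) - f1).
Proof. apply (dd_comp_O yn 2); [lia | apply yn_O2]. Qed.

Lemma ddy_O0 : Oe 0 (fun x => dd (yn x)).
Proof. apply (bigO0_of_shift 2 _ f1 ddy_O2). Qed.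

Lemma t1_O1 : Oe 1 t1.
Proof.
  apply (bigO_ext 1 (fun x => err x * Wn x * Yn x * dd (yn x) / dd x)); [| exact t1_eq].
  apply bigO_div; [|apply dd_away].
  apply (bigO_mult 1 0); [lia | | apply ddy_O0].
  apply (bigO_mult 1 0); [lia | | apply Yn_O0].
  apply (bigO_mult 1 0); [lia | apply err_O1 | apply Wn_O0].
Qed.

Lemma t2_O1 : Oe 1 t2.
Proof.
  apply (bigO_ext 1 (fun x => err x * Yn x * dd (yn x) / ddw x)); [| exact t2_eq].
  apply bigO_div; [|apply ddw_away].
  apply (bigO_mult 1 0); [lia | | apply ddy_O0].
  apply (bigO_mult 1 0); [lia | apply err_O1 | apply Yn_O0].
Qed.

Hypothesis HG : smooth_near0 G.
Hypothesis HH : smooth_near0 H.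

Lemma Gt_O0 : Oe 0 (fun x => G (t1 x, t2 x)).
Proof. exact (bigO0_smooth G 1 t1 t2 HG (le_n 1) t1_O1 t2_O1). Qed.

Lemma zcoef_O0 : Oe 0 zcoef.
Proof.
  unfold zcoef; apply bigO_div; [|apply den_away].
  apply (bigO_mult 0 0); [lia | apply bigO_const | apply dd_O0].
Qed.

Lemma Zn_O0 : Oe 0 Zn.
Proof.
  unfold Zn; apply bigO_minus; [apply bigO_const|].
  apply (bigO_mult 0 0); [lia | | apply Gt_O0].
  apply (bigO_mult 0 0); [lia | apply zcoef_O0 | apply ddy_O0].
Qed.

Lemma zn_O (j : nat) : Oe j Zn -> Oe (2 + j) (fun x => zn x - alpha).
Proof.
  intros HZ; apply (bigO_ext _ (fun x => (yn x - alpha) * Zn x)); [| exact zn_err].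
  apply (bigO_mult 2 j); [lia | apply yn_O2 | exact HZ].
Qed.

Lemma zn_O2 : Oe 2 (fun x => zn x - alpha).
Proof. exact (zn_O 0 Zn_O0). Qed.

Lemma ddz_O0 : Oe 0 (fun x => dd (zn x)).
Proof. apply (bigO0_of_shift 2 _ f1). apply dd_comp_O; [lia | apply zn_O2]. Qed.

Lemma s1_O (j : nat) : Oe j Zn -> Oe (1 + j) s1.
Proof.
  intros HZ.
  apply (bigO_ext _ (fun x => err x * Wn x * Yn x * Zn x * dd (zn x) / dd x)); [| exact s1_eq].
  apply bigO_div; [|apply dd_away].
  apply (bigO_mult (1 + j) 0); [lia | | apply ddz_O0].
  apply (bigO_mult 1 j); [lia | | exact HZ].
  apply (bigO_mult 1 0); [lia | | apply Yn_O0].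
  apply (bigO_mult 1 0); [lia | apply err_O1 | apply Wn_O0].
Qed.

Lemma s2_O (j : nat) : Oe j Zn -> Oe (1 + j) s2.
Proof.
  intros HZ; apply (bigO_ext _ (fun x => err x * Yn x * Zn x * dd (zn x) / ddw x)); [| exact s2_eq].
  apply bigO_div; [|apply ddw_away].
  apply (bigO_mult (1 + j) 0); [lia | | apply ddz_O0].
  apply (bigO_mult 1 j); [lia | | exact HZ].
  apply (bigO_mult 1 0); [lia | apply err_O1 | apply Yn_O0].
Qed.

Lemma x_sub_yn (x : R) : defined x -> x - yn x = av (err x) (Wn x) (Yn x).
Proof.
  intros HP; replace (x - yn x) with (err x - (yn x - alpha)) by (unfold err; ring).
  rewrite (yn_err x HP). unfold av, alp. ring.
Qed.

Lemma zn_sub_yn (x : R) : defined x -> zn x - yn x = bv (err x) (Wn x) (Yn x) (Zn x).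
Proof.
  intros HP; replace (zn x - yn x) with ((zn x - alpha) - (yn x - alpha)) by ring.
  rewrite (zn_err x HP), (yn_err x HP). unfold bv, bet. ring.
Qed.

Lemma wn_sub_yn (x : R) : defined x -> wn x - yn x = cv (err x) (Wn x) (Yn x).
Proof.
  intros HP; replace (wn x - yn x) with ((wn x - alpha) - (yn x - alpha)) by ring.
  rewrite wn_err, (yn_err x HP). unfold cv, gam. ring.
Qed.

Lemma defined_nonzero_ratios (x : R) : defined x ->
  alp (err x) (Wn x) (Yn x) <> 0 /\ Yn x <> 0 /\ Zn x - 1 <> 0 /\ gam (err x) (Yn x) <> 0 /\
  mu (err x) (Wn x) (Yn x) (Zn x) <> 0 /\ nu (Wn x) <> 0 /\ lam (err x) (Yn x) (Zn x) <> 0.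
Proof.
  intros HP; destruct (defined_nonzero x HP) as [he [hF [hW [hFw hD]]]].
  pose proof HP as HP'.
  destruct HP' as [_ [_ [_ [ha [hb [hc [hab [hac [hbc _]]]]]]]]].
  cbv zeta in ha, hb, hc, hab, hac, hbc.
  fold (yn x) (zn x) (wn x) in ha, hb, hc, hab, hac, hbc.
  rewrite (x_sub_yn x HP) in ha, hab, hac. rewrite (zn_sub_yn x HP) in hb, hab, hbc.
  rewrite (wn_sub_yn x HP) in hc, hac, hbc.
  rewrite av_sub_bv in hab. rewrite av_sub_cv in hac. rewrite bv_sub_cv in hbc.
  unfold av, bv, cv, bet in ha, hb, hc.
  repeat split; intro E.
  - apply ha; rewrite E; ring.
  - apply hb; rewrite E; ring.
  - apply hb; rewrite E; ring.
  - apply hc; rewrite E; ring.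
  - apply hab; rewrite E; ring.
  - apply hac; rewrite E; ring.
  - apply hbc; rewrite E; ring.
Qed.

Definition tau_sum (x : R) : R :=
  Rabs (tau1 (err x) (Wn x) (Yn x) (Zn x)) + Rabs (tau2 (err x) (Wn x) (Yn x) (Zn x))
  + Rabs (tau3 (err x) (Wn x) (Yn x) (Zn x)) + Rabs (tau4 (err x) (Wn x) (Yn x) (Zn x))
  + Rabs (tau5 (err x) (Wn x) (Yn x) (Zn x)).

Lemma psin_residue (x : R) : defined x -> Rabs (x - alpha) <= r0 -> Rabs (yn x - alpha) <= r0 ->
  Rabs (zn x - alpha) <= r0 -> Rabs (wn x - alpha) <= r0 ->
  Rabs (psin x - Derive_n f 1 (zn x)) <= B / 24 * tau_sum x.
Proof.
  intros HP hx hy hz hw.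
  destruct (defined_nonzero x HP) as [he [hF [hW [hFw hD]]]].
  destruct (defined_nonzero_ratios x HP) as [h1 [h2 [h3 [h4 [h5 [h6 h7]]]]]].
  pose proof HP as HP'.
  destruct HP' as [_ [_ [_ [ha [hb [hc [hab [hac [hbc _]]]]]]]]].
  cbv zeta in ha, hb, hc, hab, hac, hbc.
  fold (yn x) (zn x) (wn x) in ha, hb, hc, hab, hac, hbc.
  unfold psin.
  rewrite (psi_of_residues f x (yn x) (zn x) (wn x) (Derive_n f 1 (zn x)) (Derive_n f 2 (zn x) / 2)
     (Derive_n f 3 (zn x) / 6)); auto.
  rewrite (x_sub_yn x HP), (zn_sub_yn x HP), (wn_sub_yn x HP).
  unfold tau_sum; apply psi_residue_bound; auto.
  - rewrite <- (x_sub_yn x HP), <- (zn_sub_yn x HP).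
    replace (x - yn x - (zn x - yn x)) with (x - zn x) by ring.
    apply taylor_cubic_bound; auto.
  - rewrite <- (zn_sub_yn x HP).
    replace ((zn x - yn x) ^ 4) with ((yn x - zn x) ^ 4) by ring.
    apply taylor_cubic_bound; auto.
  - rewrite <- (wn_sub_yn x HP), <- (zn_sub_yn x HP).
    replace (wn x - yn x - (zn x - yn x)) with (wn x - zn x) by ring.
    apply taylor_cubic_bound; auto.
Qed.

Lemma alp_away : Away (fun x => alp (err x) (Wn x) (Yn x)).
Proof.
  apply (away0_of_bigO _ 1); [|lra].
  apply (bigO_ext 1 (fun x => - (err x * Wn x * Yn x))); [|intros; unfold alp; ring].
  apply bigO_opp. apply (bigO_mult 1 0); [lia | | apply Yn_O0].
  apply (bigO_mult 1 0); [lia | apply err_O1 | apply Wn_O0].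
Qed.

Lemma gam_away : Away (fun x => gam (err x) (Yn x)).
Proof.
  apply (away0_of_bigO _ 1); [|lra].
  apply (bigO_ext 1 (fun x => - (err x * Yn x))); [|intros; unfold gam; ring].
  apply bigO_opp. apply (bigO_mult 1 0); [lia | apply err_O1 | apply Yn_O0].
Qed.

Lemma mu_away : Away (fun x => mu (err x) (Wn x) (Yn x) (Zn x)).
Proof.
  apply (away0_of_bigO _ 1); [|lra].
  apply (bigO_ext 1 (fun x => - (err x * Wn x * Yn x * Zn x))); [|intros; unfold mu; ring].
  apply bigO_opp. apply (bigO_mult 1 0); [lia | | apply Zn_O0].
  apply (bigO_mult 1 0); [lia | | apply Yn_O0].
  apply (bigO_mult 1 0); [lia | apply err_O1 | apply Wn_O0].
Qed.

Lemma lam_away : Away (fun x => lam (err x) (Yn x) (Zn x)).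
Proof.
  apply (away0_of_bigO _ (-1)); [|lra].
  apply (bigO_ext 1 (fun x => err x * Yn x * Zn x)); [|intros; unfold lam; ring].
  apply (bigO_mult 1 0); [lia | | apply Zn_O0].
  apply (bigO_mult 1 0); [lia | apply err_O1 | apply Yn_O0].
Qed.

Lemma nu_away : Away (fun x => nu (Wn x)).
Proof.
  apply (away0_of_bigO _ (kappa * f1)).
  - apply (bigO_ext 1 (fun x => kappa * (dd x - f1))); [|intros; unfold nu, Wn; ring].
    apply (bigO_mult 0 1); [lia | apply bigO_const | apply dd_O1].
  - apply Rmult_integral_contrapositive_currified; auto.
Qed.

Lemma Zn_sub1_O0 : Oe 0 (fun x => Zn x - 1).
Proof. apply bigO_minus; [apply Zn_O0 | apply bigO_const]. Qed.

Lemma bet_O0 : Oe 0 (fun x => bet (Wn x) (Yn x) (Zn x)).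
Proof.
  unfold bet; apply (bigO_mult 0 0); [lia | | apply Zn_sub1_O0].
  apply (bigO_mult 0 0); [lia | apply Wn_O0 | apply Yn_O0].
Qed.

Lemma lam_O0 : Oe 0 (fun x => lam (err x) (Yn x) (Zn x)).
Proof.
  unfold lam; apply bigO_minus; [|apply bigO_const].
  apply (bigO_mult 0 0); [lia | | apply Zn_O0].
  apply (bigO_mult 0 0); [lia | apply err_O0 | apply Yn_O0].
Qed.

Lemma mu_O0 : Oe 0 (fun x => mu (err x) (Wn x) (Yn x) (Zn x)).
Proof.
  unfold mu; apply bigO_minus; [apply bigO_const|].
  apply (bigO_mult 0 0); [lia | | apply Zn_O0].
  apply (bigO_mult 0 0); [lia | | apply Yn_O0].
  apply (bigO_mult 0 0); [lia | apply err_O0 | apply Wn_O0].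
Qed.

Lemma av_O0 : Oe 0 (fun x => av (err x) (Wn x) (Yn x)).
Proof.
  unfold av, alp; apply (bigO_mult 0 0); [lia | apply err_O0 |].
  apply bigO_minus; [apply bigO_const|].
  apply (bigO_mult 0 0); [lia | | apply Yn_O0].
  apply (bigO_mult 0 0); [lia | apply err_O0 | apply Wn_O0].
Qed.

Lemma bv_O0 : Oe 0 (fun x => bv (err x) (Wn x) (Yn x) (Zn x)).
Proof.
  unfold bv; apply (bigO_mult 0 0); [lia | | apply bet_O0].
  apply (bigO_weaken 2); [lia | apply (bigO_pow 2 1 _ err_O1)].
Qed.

Lemma cv_O0 : Oe 0 (fun x => cv (err x) (Wn x) (Yn x)).
Proof.
  unfold cv, gam; apply (bigO_mult 0 0); [lia | |].
  - apply (bigO_mult 0 0); [lia | apply err_O0 | apply Wn_O0].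
  - apply bigO_minus; [apply bigO_const|].
    apply (bigO_mult 0 0); [lia | apply err_O0 | apply Yn_O0].
Qed.

Lemma tau1_O4 : Oe 4 (fun x => tau1 (err x) (Wn x) (Yn x) (Zn x)).
Proof.
  unfold tau1; apply bigO_div; [| apply away0_mult; [apply nu_away | apply alp_away]].
  apply (bigO_mult 4 0); [lia | | apply (bigO_pow 3 0 _ mu_O0)].
  apply (bigO_mult 4 0); [lia | | apply lam_O0].
  apply (bigO_mult 4 0); [lia | | apply Wn_O0].
  apply (bigO_mult 4 0); [lia | apply (bigO_pow 4 1 _ err_O1) | apply bet_O0].
Qed.

Lemma tau2_O4 : Oe 4 (fun x => tau2 (err x) (Wn x) (Yn x) (Zn x)).
Proof.
  apply (bigO_weaken 8); [lia|].
  unfold tau2; apply bigO_div.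
  2: apply away0_mult; [apply away0_mult; [apply mu_away | apply nu_away] | apply alp_away].
  apply (bigO_mult 8 0); [lia | | apply lam_O0].
  apply (bigO_mult 8 0); [lia | | apply Wn_O0].
  apply (bigO_mult 8 0); [lia | apply (bigO_pow 8 1 _ err_O1) | apply (bigO_pow 5 0 _ bet_O0)].
Qed.

Lemma tau3_O4 : Oe 4 (fun x => tau3 (err x) (Wn x) (Yn x) (Zn x)).
Proof.
  unfold tau3; apply bigO_div; [| apply away0_mult; [apply mu_away | apply lam_away]].
  apply (bigO_mult 4 0); [lia | | apply (bigO_pow 3 0 _ Zn_sub1_O0)].
  apply (bigO_mult 4 0); [lia | | apply (bigO_pow 3 0 _ Yn_O0)].
  apply (bigO_mult 4 0); [lia | | apply (bigO_pow 2 0 _ Wn_O0)].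
  apply (bigO_mult 0 4); [lia | | apply (bigO_pow 4 1 _ err_O1)].
  apply bigO_minus; [apply bigO_plus; [apply bigO_plus|]|].
  - apply (bigO_mult 0 0); [lia | apply bigO_const | apply (bigO_pow 2 0 _ bv_O0)].
  - apply (bigO_mult 0 0); [lia | | apply cv_O0].
    apply (bigO_mult 0 0); [lia | apply bigO_const | apply bv_O0].
  - apply (bigO_mult 0 0); [lia | | apply bv_O0].
    apply (bigO_mult 0 0); [lia | apply bigO_const | apply av_O0].
  - apply (bigO_mult 0 0); [lia | apply av_O0 | apply cv_O0].
Qed.

Lemma tau4_O4 : Oe 4 (fun x => tau4 (err x) (Wn x) (Yn x) (Zn x)).
Proof.
  unfold tau4; apply bigO_opp, bigO_div; [| apply away0_mult; [apply nu_away | apply gam_away]].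
  apply (bigO_mult 4 0); [lia | | apply (bigO_pow 3 0 _ lam_O0)].
  apply (bigO_mult 4 0); [lia | | apply (bigO_pow 2 0 _ Wn_O0)].
  apply (bigO_mult 4 0); [lia | | apply mu_O0].
  apply (bigO_mult 4 0); [lia | apply (bigO_pow 4 1 _ err_O1) | apply bet_O0].
Qed.

Lemma tau5_O4 : Oe 4 (fun x => tau5 (err x) (Wn x) (Yn x) (Zn x)).
Proof.
  apply (bigO_weaken 8); [lia|].
  unfold tau5; apply bigO_opp, bigO_div.
  2: apply away0_mult; [apply away0_mult; [apply nu_away | apply lam_away] | apply gam_away].
  apply (bigO_mult 8 0); [lia | | apply mu_O0].
  apply (bigO_mult 8 0); [lia | | apply (bigO_pow 5 0 _ Zn_sub1_O0)].
  apply (bigO_mult 8 0); [lia | | apply (bigO_pow 5 0 _ Yn_O0)].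
  apply (bigO_mult 8 0); [lia | apply (bigO_pow 8 1 _ err_O1) | apply (bigO_pow 3 0 _ Wn_O0)].
Qed.

Lemma near_r0 (u : R -> R) (k : nat) : (1 <= k)%nat -> Oe k (fun x => u x - alpha) ->
  Near (fun x => Rabs (u x - alpha) <= r0).
Proof.
  intros Hk Hu. apply (near_impl _ _ (bigO_small _ r0 (bigO_weaken k 1 _ Hk Hu) Hr0)).
  intros; lra.
Qed.

Lemma psin_O4 : Oe 4 (fun x => psin x - Derive_n f 1 (zn x)).
Proof.
  apply (bigO_dominated _ tau_sum _ (B / 24)).
  - unfold tau_sum; repeat apply bigO_plus; apply bigO_abs;
      [apply tau1_O4 | apply tau2_O4 | apply tau3_O4 | apply tau4_O4 | apply tau5_O4].
  - pose proof (near_r0 (fun x => x) 1 (le_n 1) bigO_err) as N1.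
    pose proof (near_r0 yn 2 ltac:(lia) yn_O2) as N2.
    pose proof (near_r0 zn 2 ltac:(lia) zn_O2) as N3.
    pose proof (near_r0 wn 1 ltac:(lia) wn_O1) as N4.
    apply (near_impl _ _ (near_and _ _ (near_and _ _ N1 N2) (near_and _ _ N3 N4))).
    intros x HP [[A1 A2] [A3 A4]].
    apply Rle_trans with (1 := psin_residue x HP A1 A2 A3 A4).
    apply Rmult_le_compat_l; [lra | apply Rle_abs].
Qed.

Lemma deriv_zn_O (k : nat) : Oe k (fun x => zn x - alpha) -> (1 <= k)%nat ->
  Oe k (fun x => Derive_n f 1 (zn x) - dd (zn x)).
Proof.
  intros Hz Hk. apply (bigO_dominated _ _ _ (B / 2) Hz).
  apply (near_impl _ _ (near_r0 zn k Hk Hz)). intros x _ A.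
  apply deriv_dd_bound in A. apply Rle_trans with (1 := A). right. reflexivity.
Qed.

Lemma psin_O1 : Oe 1 (fun x => psin x - f1).
Proof.
  apply (bigO_ext 1 (fun x => (psin x - Derive_n f 1 (zn x)) + (Derive_n f 1 (zn x) - dd (zn x))
      + (dd (zn x) - f1))); [|intros; ring].
  apply bigO_plus; [apply bigO_plus|].
  - apply (bigO_weaken 4); [lia | apply psin_O4].
  - apply (bigO_weaken 2); [lia|]. apply deriv_zn_O; [apply zn_O2 | lia].
  - apply (bigO_weaken 2); [lia|]. apply dd_comp_O; [lia | apply zn_O2].
Qed.

Lemma psin_away : Away psin.
Proof. exact (away0_of_bigO psin f1 psin_O1 Hsimple). Qed.

Lemma step_O2 : Oe 2 (fun x => step f kappa G H x - alpha).
Proof.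
  apply (bigO_ext _ (fun x => (zn x - alpha) * ((psin x - dd (zn x) * H (s1 x, s2 x)) / psin x)));
    [| exact step_err].
  apply (bigO_mult 2 0); [lia | apply zn_O2 |].
  apply bigO_div; [|apply psin_away]. apply bigO_minus.
  - apply (bigO0_of_shift 1 _ f1). apply psin_O1.
  - apply (bigO_mult 0 0); [lia | apply ddz_O0 |].
    exact (bigO0_smooth H 1 s1 s2 HH (le_n 1) (s1_O 0 Zn_O0) (s2_O 0 Zn_O0)).
Qed.

Definition Grem (x : R) : R := G (t1 x, t2 x) - 1 - t1 x - t2 x.

Definition Acorr (D : R -> R) (x : R) : R :=
  dd (yn x) ^ 2 * (Yn x - c2) / D x
  + c2 * ((dd (yn x) - f1) * (dd (yn x) + f1) - f1 * (D x - f1)) / D x.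

Definition Zmain (x : R) : R :=
  kappa * dd x * ((f1 - dd (yn x)) - err x * Wn x * Acorr dd x - err x * Acorr ddw x)
  + err x ^ 2 * (rem3 x - rem3 (wn x) * Wn x ^ 3).

(* Everything but the [Grem] term is [O(e ^ 2)] whatever [G] is, see
   [Zmain_O2]; [Grem] measures how far [G (t1, t2)] is from [1 + t1 + t2]. *)
Lemma Zn_expand (x : R) : defined x ->
  Zn x = Zmain x / den x - zcoef x * dd (yn x) * Grem x.
Proof.
  intros HP; destruct (defined_nonzero x HP) as [he [hF [hW [hFw hD]]]].
  unfold Zn, Grem; rewrite (t1_eq x HP), (t2_eq x HP).
  unfold Zmain, Acorr, zcoef, c2, den, ddw in *.
  assert (Edw : dd (wn x) = f1 + f2 * (err x * Wn x) + rem3 (wn x) * (err x * Wn x) ^ 2)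
    by (unfold dd at 1; rewrite wn_err; reflexivity).
  assert (Edx : dd x = f1 + f2 * err x + rem3 x * err x ^ 2) by reflexivity.
  assert (EW : Wn x = 1 - kappa * dd x) by reflexivity.
  set (g := G _) in *; set (Fy := dd (yn x)) in *.
  set (Fx := dd x) in *; set (Fw := dd (wn x)) in *.
  clearbody g Fy Fx Fw; set (Wv := Wn x) in *; set (e := err x) in *; clearbody Wv e.
  subst Fw Fx Wv; field; repeat split; auto.
Qed.

Lemma Acorr_O1 (D : R -> R) : Oe 1 (fun x => D x - f1) -> Away D -> Oe 1 (Acorr D).
Proof.
  intros HD1 HD; unfold Acorr; apply bigO_plus; apply bigO_div; try exact HD.
  - apply (bigO_mult 0 1); [lia | apply (bigO_pow 2 0 _ ddy_O0) | apply Yn_O1].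
  - apply (bigO_mult 0 1); [lia | apply bigO_const |]; apply bigO_minus.
    + apply (bigO_mult 1 0); [lia | apply (bigO_weaken 2); [lia | apply ddy_O2] |].
      apply bigO_plus; [apply ddy_O0 | apply bigO_const].
    + apply (bigO_mult 0 1); [lia | apply bigO_const | exact HD1].
Qed.

Lemma Zmain_O2 : Oe 2 Zmain.
Proof.
  unfold Zmain; apply bigO_plus.
  - apply (bigO_mult 0 2); [lia | |].
    + apply (bigO_mult 0 0); [lia | apply bigO_const | apply dd_O0].
    + apply bigO_minus; [apply bigO_minus |].
      * apply (bigO_ext 2 (fun x => - (dd (yn x) - f1))); [apply bigO_opp, ddy_O2 | intros; ring].
      * apply (bigO_mult 1 1); [lia | | apply (Acorr_O1 dd dd_O1 dd_away)].
        apply (bigO_mult 1 0); [lia | apply err_O1 | apply Wn_O0].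
      * apply (bigO_mult 1 1); [lia | apply err_O1 | apply (Acorr_O1 ddw ddw_O1 ddw_away)].
  - apply (bigO_mult 2 0); [lia | apply (bigO_pow 2 1 _ err_O1) |].
    apply bigO_minus; [apply rem3_O0 |].
    apply (bigO_mult 0 0); [lia | apply rem3w_O0 | apply (bigO_pow 3 0 Wn Wn_O0)].
Qed.

Section OptimalWeights.
Hypothesis HG00 : G (0, 0) = 1.
Hypothesis HG1 : partial1 G (0, 0) = 1.
Hypothesis HG2 : partial2 G (0, 0) = 1.
Hypothesis HH00 : H (0, 0) = 1.
Hypothesis HH1 : partial1 H (0, 0) = 0.
Hypothesis HH2 : partial2 H (0, 0) = 0.

Lemma Grem_O2 : Oe 2 Grem.
Proof.
  apply (bigO_ext 2 (fun x => taylor2_rem G (t1 x) (t2 x))).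
  - exact (bigO_smooth_taylor2 G 1 t1 t2 HG (le_n 1) t1_O1 t2_O1).
  - intros x _; unfold Grem, taylor2_rem; rewrite HG00, HG1, HG2; ring.
Qed.

Lemma Zn_O2 : Oe 2 Zn.
Proof.
  apply (bigO_ext 2 (fun x => Zmain x / den x - zcoef x * dd (yn x) * Grem x)); [| exact Zn_expand].
  apply bigO_minus.
  - apply bigO_div; [apply Zmain_O2 | apply den_away].
  - apply (bigO_mult 0 2); [lia | | apply Grem_O2].
    apply (bigO_mult 0 0); [lia | apply zcoef_O0 | apply ddy_O0].
Qed.

Lemma step_O8 : Oe 8 (fun x => step f kappa G H x - alpha).
Proof.
  pose proof Zn_O2 as HZ.
  apply (bigO_ext _ (fun x => (zn x - alpha) * ((psin x - dd (zn x) * H (s1 x, s2 x)) / psin x)));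
    [| exact step_err].
  apply (bigO_mult 4 4); [lia | apply (zn_O 2 HZ) |].
  apply bigO_div; [|apply psin_away].
  apply (bigO_ext _ (fun x => (psin x - Derive_n f 1 (zn x)) + (Derive_n f 1 (zn x) - dd (zn x))
     - dd (zn x) * taylor2_rem H (s1 x) (s2 x)));
    [| intros; unfold taylor2_rem; rewrite HH00, HH1, HH2; ring].
  apply bigO_minus; [apply bigO_plus|].
  - apply psin_O4.
  - apply deriv_zn_O; [apply (zn_O 2 HZ) | lia].
  - apply (bigO_mult 0 4); [lia | apply ddz_O0 |].
    apply (bigO_weaken (2 * 3)); [lia|].
    exact (bigO_smooth_taylor2 H 3 s1 s2 HH ltac:(lia) (s1_O 2 HZ) (s2_O 2 HZ)).
Qed.

End OptimalWeights.

End Scheme.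

(** * Convergence *)

Lemma inD_ball (lo hi : Rbar) (alpha : R) : inD lo hi alpha ->
  exists r, 0 < r /\ forall u, Rabs (u - alpha) < r -> inD lo hi u.
Proof.
  intros [Hl Hh].
  destruct lo as [l | |]; destruct hi as [h | |]; simpl in Hl, Hh; try contradiction.
  - exists (Rmin (alpha - l) (h - alpha)); split; [apply Rmin_pos; lra |].
    intros u Hu; apply Rabs_lt_between in Hu.
    pose proof (Rmin_l (alpha - l) (h - alpha)); pose proof (Rmin_r (alpha - l) (h - alpha)).
    unfold inD; simpl; split; lra.
  - exists (alpha - l); split; [lra |]; intros u Hu; apply Rabs_lt_between in Hu.
    unfold inD; simpl; split; [lra | exact I].
  - exists (h - alpha); split; [lra |]; intros u Hu; apply Rabs_lt_between in Hu.
    unfold inD; simpl; split; [exact I | lra].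
  - exists 1; split; [lra |]; intros; unfold inD; simpl; split; exact I.
Qed.

Lemma derive_n_bounded_near (f : R -> R) (alpha r1 : R) (n : nat) : 0 < r1 ->
  (forall u, Rabs (u - alpha) < r1 -> forall k, ex_derive_n f k u) ->
  exists r0 B, 0 < r0 /\ r0 < r1 /\ 0 <= B /\
    forall u, Rabs (u - alpha) <= r0 -> forall k, (k <= n)%nat -> Rabs (Derive_n f k u) <= B.
Proof.
  intros Hr1 Hf.
  assert (Hcont : forall k, exists d, 0 < d /\ forall u, Rabs (u - alpha) < d ->
            Rabs (Derive_n f k u) <= Rabs (Derive_n f k alpha) + 1).
  { intros k.
    destruct (continuous_locally_bounded (Derive_n f k) alpha) as [d Hd].
    - apply (@ex_derive_continuous R_AbsRing R_NormedModule).
      apply (Hf alpha ltac:(rewrite Rminus_diag, Rabs_R0; lra) (S k)).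
    - exists d; split; [apply cond_pos | exact Hd]. }
  induction n as [|n [r0 [B [Hr0 [Hr01 [HB HbB]]]]]].
  - destruct (Hcont 0%nat) as [d [Hd Hb]].
    exists (Rmin (r1 / 2) (d / 2)), (Rabs (Derive_n f 0 alpha) + 1).
    pose proof (Rmin_l (r1 / 2) (d / 2)); pose proof (Rmin_r (r1 / 2) (d / 2)).
    repeat split; [apply Rmin_pos; lra | lra | pose proof (Rabs_pos (Derive_n f 0 alpha)); lra |].
    intros u Hu k Hk; replace k with 0%nat by lia; apply Hb; lra.
  - destruct (Hcont (S n)) as [d [Hd Hb]].
    exists (Rmin r0 (d / 2)), (Rmax B (Rabs (Derive_n f (S n) alpha) + 1)).
    pose proof (Rmin_l r0 (d / 2)); pose proof (Rmin_r r0 (d / 2)).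
    pose proof (Rmax_l B (Rabs (Derive_n f (S n) alpha) + 1)).
    pose proof (Rmax_r B (Rabs (Derive_n f (S n) alpha) + 1)).
    repeat split; [apply Rmin_pos; lra | lra | lra |].
    intros u Hu k Hk; destruct (Nat.eq_dec k (S n)) as [-> | Hne].
    + apply Rle_trans with (2 := Rmax_r _ _); apply Hb; lra.
    + apply Rle_trans with (2 := Rmax_l _ _); apply HbB; [lra | lia].
Qed.

Lemma quadratic_iteration_halves (x : nat -> R) (alpha C r : R) : 0 <= C -> 0 < r ->
  (forall n, Rabs (x n - alpha) < r -> Rabs (x (S n) - alpha) <= C * Rabs (x n - alpha) ^ 2) ->
  Rabs (x O - alpha) < Rmin r (/ (2 * (C + 1))) ->
  forall n, Rabs (x n - alpha) <= (/ 2) ^ n * Rabs (x O - alpha).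
Proof.
  intros HC Hr Hstep H0.
  pose proof (Rmin_l r (/ (2 * (C + 1)))); pose proof (Rmin_r r (/ (2 * (C + 1)))).
  assert (Hsmall : C * Rmin r (/ (2 * (C + 1))) <= / 2).
  { apply Rle_trans with (C * / (2 * (C + 1))); [apply Rmult_le_compat_l; lra |].
    apply (Rmult_le_reg_r (2 * (C + 1))); [lra |].
    rewrite Rmult_assoc, Rinv_l by lra; nra. }
  induction n as [|n IH]; [simpl; lra |].
  assert (Hpow : (/ 2) ^ n <= 1) by (rewrite <- (pow1 n); apply pow_incr; lra).
  pose proof (Rabs_pos (x O - alpha)); pose proof (Rabs_pos (x n - alpha)).
  assert (Hn : Rabs (x n - alpha) < Rmin r (/ (2 * (C + 1)))) by nra.
  apply Rle_trans with (1 := Hstep n ltac:(lra)).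
  apply Rle_trans with (/ 2 * Rabs (x n - alpha)); [simpl; nra |].
  simpl; rewrite Rmult_assoc; apply Rmult_le_compat_l; lra.
Qed.

Lemma is_lim_seq_geometric_bound (x : nat -> R) (alpha K : R) :
  (forall n, Rabs (x n - alpha) <= (/ 2) ^ n * K) -> is_lim_seq x alpha.
Proof.
  intros Hb.
  assert (Hgeo : is_lim_seq (fun n => (/ 2) ^ n * K) 0).
  { replace (Finite 0) with (Rbar_mult 0 K) by (simpl; f_equal; ring).
    apply is_lim_seq_scal_r, is_lim_seq_geom; rewrite Rabs_right; lra. }
  apply is_lim_seq_le_le with (fun n => alpha - (/ 2) ^ n * K) (fun n => alpha + (/ 2) ^ n * K).
  - intros n; specialize (Hb n); apply Rabs_le_between' in Hb; lra.
  - replace (Finite alpha) with (Rbar_minus alpha 0) by (simpl; f_equal; ring).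
    apply is_lim_seq_minus'; [apply is_lim_seq_const | exact Hgeo].
  - replace (Finite alpha) with (Rbar_plus alpha 0) by (simpl; f_equal; ring).
    apply is_lim_seq_plus'; [apply is_lim_seq_const | exact Hgeo].
Qed.

Theorem theorem1 (lo hi : Rbar) (f : R -> R) (alpha kappa : R)
  (G H : R * R -> R)
  (Hf : forall (n : nat) (x : R), inD lo hi x -> ex_derive_n f n x)
  (Halpha : inD lo hi alpha) (Hroot : f alpha = 0)
  (Hsimple : Derive f alpha <> 0)
  (Hkappa : kappa <> 0)
  (HG : smooth_near0 G) (HH : smooth_near0 H) :
  exists delta : R, 0 < delta /\
    forall x : nat -> R,
      Rabs (x O - alpha) < delta ->
      (forall n : nat, x (S n) = step f kappa G H (x n)) ->
      (forall n : nat, step_defined f kappa G (x n)) ->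
      is_lim_seq x alpha /\
      (G (0, 0) = 1 -> partial1 G (0, 0) = 1 -> partial2 G (0, 0) = 1 ->
       H (0, 0) = 1 -> partial1 H (0, 0) = 0 -> partial2 H (0, 0) = 0 ->
       exists (C : R) (N : nat), forall n : nat, (N <= n)%nat ->
         Rabs (x (S n) - alpha) <= C * Rabs (x n - alpha) ^ 8).
Proof.
  destruct (inD_ball lo hi alpha Halpha) as [r1 [Hr1 Hball]].
  assert (f_smooth : forall u, Rabs (u - alpha) < r1 -> forall n, ex_derive_n f n u)
    by (intros u Hu n; apply Hf, Hball, Hu).
  destruct (derive_n_bounded_near f alpha r1 4 Hr1 f_smooth)
    as [r0 [B [Hr0 [Hr01 [HB0 HB]]]]].
  destruct (step_O2 f alpha kappa G H r1 r0 B f_smooth Hr0 Hr01 HB0 HB Hroot Hsimple Hkappa HG HH)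
    as [C [HC [r [Hr Hstep]]]].
  exists (Rmin r (/ (2 * (C + 1)))); split.
  { apply Rmin_pos; [exact Hr | apply Rinv_0_lt_compat; lra]. }
  intros x H0 Hrec Hdef.
  assert (Hlim : is_lim_seq x alpha).
  { apply (is_lim_seq_geometric_bound x alpha (Rabs (x O - alpha))).
    apply (quadratic_iteration_halves x alpha C r HC Hr); [| exact H0].
    intros n Hn; rewrite Hrec; exact (Hstep (x n) (Hdef n) Hn). }
  split; [exact Hlim |].
  intros HG0 HG1 HG2 HH0 HH1 HH2.
  destruct (step_O8 f alpha kappa G H r1 r0 B f_smooth Hr0 Hr01 HB0 HB Hroot Hsimple Hkappa
              HG HH HG0 HG1 HG2 HH0 HH1 HH2) as [C8 [_ [r8 [Hr8 Hstep8]]]].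
  destruct (Hlim (fun y => Rabs (y - alpha) < r8)) as [N HN].
  { exists (mkposreal r8 Hr8); intros y Hy; exact Hy. }
  exists C8, N; intros n Hn; rewrite Hrec; apply Hstep8; [apply Hdef | apply HN, Hn].
Qed.
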